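(* Let $q$ be a prime power and $0\le t\le s$. If an invertible $s\times s$ matrix $M$ over $\mathbb{F}_q$ defines a linear $(t,s,q)$-AONT (i.e. every $t\times t$ submatrix of $M$ is invertible), then $M^{-1}$ defines a linear $(s-t,s,q)$-AONT (i.e. every $(s-t)\times(s-t)$ submatrix of $M^{-1}$ is invertible).
   Context: A linear $(t,s,q)$-AONT over $\mathbb{F}_q$ is given by an invertible $s\times s$ matrix $M$ over $\mathbb{F}_q$, the transform being $(y_1,\dots,y_s)=(x_1,\dots,x_s)M^{-1}$; $M$ defines a linear $(t,s,q)$-AONT iff every $t\times t$ submatrix of $M$ is invertible (a $0\times0$ submatrix counts as invertible). *)

From mathcomp Require Import all_boot all_order all_algebra all_field.
Set Implicit Arguments. Unset Strict Implicit. Unset Printing Implicit Defensive.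
Import GRing.Theory.
Local Open Scope ring_scope.

Definition submx_of (F : fieldType) (s t : nat) (I J : {set 'I_s})
  (hI : #|I| = t) (hJ : #|J| = t) (M : 'M[F]_s) : 'M[F]_t :=
  mxsub (fun i : 'I_t => enum_val (cast_ord (esym hI) i))
        (fun j : 'I_t => enum_val (cast_ord (esym hJ) j)) M.

Definition linear_AONT (F : fieldType) (t s : nat) (M : 'M[F]_s) : Prop :=
  M \in unitmx /\
  forall (I J : {set 'I_s}) (hI : #|I| = t) (hJ : #|J| = t),
    submx_of hI hJ M \in unitmx.

From mathcomp Require Import all_boot all_order all_algebra all_field.
Local Open Scope ring_scope.
Import GRing.Theory.

(* The (I, J) submatrix of A is singular iff some nonzero row vector y
   supported on I has y A vanishing on J.  If y witnesses this for M^-1,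
   then z := y M^-1 vanishes on J and z M = y vanishes off I, so z witnesses
   the singularity of the complementary (~J, ~I) submatrix of M. *)

Definition singular_witness {F : fieldType} {m n} (I : {set 'I_m})
    (J : {set 'I_n}) (A : 'M[F]_(m, n)) (y : 'rV[F]_m) : Prop :=
  [/\ y != 0, {in ~: I, forall i, y 0 i = 0} & {in J, forall j, (y *m A) 0 j = 0}].

Section SelectedSubmatrix.

Variables (F : fieldType) (m n k : nat).
Variables (f : 'I_k -> 'I_m) (g : 'I_k -> 'I_n).
Variables (I : {set 'I_m}) (J : {set 'I_n}).
Hypothesis f_inj : injective f.
Hypothesis defI : I = [set f x | x in 'I_k].
Hypothesis defJ : J = [set g x | x in 'I_k].

Lemma mxsub_mulE (A : 'M[F]_(m, n)) :
  mxsub f g A = rowsub f 1%:M *m A *m colsub g 1%:M.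
Proof. by rewrite -mulmxA mulmx_colsub mulmx1 -mxsub_mul mul1mx. Qed.

Lemma colsub_mul_rowsub1 (u : 'rV[F]_k) : colsub f (u *m rowsub f 1%:M) = u.
Proof.
apply/rowP => i; rewrite !mxE (bigD1 i) //= !mxE eqxx mulr1 big1 ?addr0 //.
by move=> i' /negbTE ne_i'i; rewrite !mxE (inj_eq f_inj) ne_i'i mulr0.
Qed.

Lemma supported_colsubK (y : 'rV[F]_m) :
  {in ~: I, forall i, y 0 i = 0} -> colsub f y *m rowsub f 1%:M = y.
Proof.
move=> y_supp; apply/rowP => j; rewrite mxE.
have [/imsetP[i _ ->]|j_notin] := boolP (j \in [set f x | x in 'I_k]).
  rewrite (bigD1 i) //= !mxE eqxx mulr1 big1 ?addr0 // => i' /negbTE ne_i'i.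
  by rewrite !mxE (inj_eq f_inj) ne_i'i mulr0.
rewrite y_supp ?defI ?in_setC // big1 // => i _; rewrite !mxE.
by case: eqP => [eq_ij|]; [rewrite -eq_ij imset_f in j_notin | rewrite mulr0].
Qed.

Lemma mxsub_unitmxPn (A : 'M[F]_(m, n)) :
  reflect (exists y, singular_witness I J A y) (mxsub f g A \notin unitmx).
Proof.
rewrite unitmxE unitfE negbK mxsub_mulE; apply: (iffP det0P).
- move=> [u nz_u uS0]; exists (u *m rowsub f 1%:M); split.
  + apply: contraNneq nz_u => y0; apply/eqP/rowP => i.
    by rewrite -[u]colsub_mul_rowsub1 y0 !mxE.
  + move=> j; rewrite defI inE => j_notin; rewrite mxE big1 // => i _.
    rewrite !mxE; case: eqP => [eq_ij|]; last by rewrite mulr0.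
    by rewrite -eq_ij imset_f in j_notin.
  + move=> _ /[1!defJ] /imsetP[i _ ->].
    move: uS0; rewrite !mulmxA mulmx_colsub mulmx1 => /rowP/(_ i).
    by rewrite [RHS]mxE mxE.
- move=> [y [nz_y y_supp yA0]]; exists (colsub f y).
    by apply: contraNneq nz_y => u0; rewrite -[y]supported_colsubK // u0 mul0mx.
  rewrite !mulmxA supported_colsubK // mulmx_colsub mulmx1; apply/rowP => i.
  by rewrite [RHS]mxE mxE yA0 // defJ imset_f.
Qed.

End SelectedSubmatrix.

Lemma submx_of_unitmxPn (F : fieldType) n t (I J : {set 'I_n})
    (hI : #|I| = t) (hJ : #|J| = t) (A : 'M[F]_n) :
  reflect (exists y, singular_witness I J A y) (submx_of hI hJ A \notin unitmx).
Proof.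
have enum_imset (K : {set 'I_n}) (hK : #|K| = t) :
    K = [set enum_val (cast_ord (esym hK) x) | x in 'I_t].
  apply/setP => j; apply/idP/imsetP => [jK|[x _ ->]]; last exact: enum_valP.
  by exists (cast_ord hK (enum_rank_in jK j)); rewrite ?cast_ordK ?enum_rankK_in.
apply: mxsub_unitmxPn; last exact: enum_imset; last exact: enum_imset.
by move=> x y /enum_val_inj/cast_ord_inj.
Qed.

Lemma singular_witness_invmx (F : fieldType) n (I J : {set 'I_n})
    (M : 'M[F]_n) (y : 'rV_n) :
  M \in unitmx -> singular_witness I J (invmx M) y ->
  singular_witness (~: J) (~: I) M (y *m invmx M).
Proof.
move=> unit_M [nz_y y_supp yMinv0]; rewrite /singular_witness setCK.
have yK : y *m invmx M *m M = y by rewrite -mulmxA mulVmx ?mulmx1.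
rewrite yK; split=> //.
by apply: contraNneq nz_y => z0; rewrite -yK z0 mul0mx.
Qed.

Theorem theorem2p24 (F : finFieldType) (s t : nat) (M : 'M[F]_s) :
  (t <= s)%N -> linear_AONT t M -> linear_AONT (s - t) (invmx M).
Proof.
move=> le_ts [unit_M AONT_M]; split=> [|I J hI hJ]; first by rewrite unitmx_inv.
have card_compl (K : {set 'I_s}) : #|K| = (s - t)%N -> #|~: K| = t.
  by move=> hK; rewrite cardsCs setCK card_ord hK subKn.
apply: contraT => /submx_of_unitmxPn[y wit_y].
suff: submx_of (card_compl J hJ) (card_compl I hI) M \notin unitmx.
  by rewrite AONT_M.
by apply/submx_of_unitmxPn; exists (y *m invmx M); apply: singular_witness_invmx.
Qed.
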